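(* Let $\mathcal{C}=\mathsf{CSS}(A,B)$ be a qudit CSS code on $n$ qudits and $H_A$ a parity-check matrix for $A$. If two columns of $H_A$ are identical, then either $\mathcal{C}$ has distance at most $2$, or swapping the two corresponding physical qudits acts as a logical identity on $\mathcal{C}$.
   Context: Let $q$ be a prime power. For classical codes $A,B\subseteq\mathbb{F}_q^n$ with full-row-rank parity-check matrices $H_A,H_B$ satisfying $H_AH_B^T=0$, $\mathsf{CSS}(A,B)$ is the qudit stabilizer code with $X$-type stabilizers the generalized Paulis $X^v$ ($v$ in the row space of $H_A$) and $Z$-type stabilizers $Z^w$ ($w$ in the row space of $H_B$). A logical identity is an operator acting as the identity on the codespace. *)

From mathcomp Require Import all_boot all_algebra all_fingroup all_field.
Set Implicit Arguments. Unset Strict Implicit. Unset Printing Implicit Defensive.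
Import GRing.Theory.
Local Open Scope ring_scope.

(* Qudit of dimension q = #|F| : computational basis indexed by F.
   An n-qudit state is a function 'rV[F]_n -> algC (amplitudes). *)
Definition state (F : finFieldType) (n : nat) := 'rV[F]_n -> algC.

(* Nontrivial additive character of F (e.g. x |-> omega^{tr x}); the
   generalized Pauli Z is defined through it. *)
Definition nontriv_add_char (F : finFieldType) (chi : F -> algC) :=
  (forall a b : F, chi (a + b) = chi a * chi b) /\ (exists a : F, chi a != 1).

Definition dotv (F : finFieldType) n (u v : 'rV[F]_n) : F := (u *m v^T) 0 0.

(* X^a |x> = |x + a> ;  Z^b |x> = chi(b.x) |x> *)
Definition Xop (F : finFieldType) n (a : 'rV[F]_n) (psi : state F n) : state F n :=
  fun x => psi (x - a).
Definition Zop (F : finFieldType) n (chi : F -> algC) (b : 'rV[F]_n)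
  (psi : state F n) : state F n :=
  fun x => chi (dotv b x) * psi x.

Definition in_codespace (F : finFieldType) n mA mB (chi : F -> algC)
  (HA : 'M[F]_(mA, n)) (HB : 'M[F]_(mB, n)) (psi : state F n) : Prop :=
  (forall v : 'rV[F]_n, (v <= HA)%MS -> Xop v psi = psi) /\
  (forall w : 'rV[F]_n, (w <= HB)%MS -> Zop chi w psi = psi).

Definition pauli_weight (F : finFieldType) n (a b : 'rV[F]_n) : nat :=
  #|[set k : 'I_n | (a 0 k != 0) || (b 0 k != 0)]|.

(* X^a Z^b is a nontrivial logical operator: it preserves the codespace
   but does not act as a scalar (i.e. as the logical identity up to phase). *)
Definition nontrivial_logical (F : finFieldType) n mA mB (chi : F -> algC)
  (HA : 'M[F]_(mA, n)) (HB : 'M[F]_(mB, n)) (a b : 'rV[F]_n) : Prop :=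
  (forall psi, in_codespace chi HA HB psi ->
     in_codespace chi HA HB (Xop a (Zop chi b psi))) /\
  ~ (exists c : algC, forall psi, in_codespace chi HA HB psi ->
        Xop a (Zop chi b psi) = (fun x => c * psi x)).

Definition distance_at_most (F : finFieldType) n mA mB (chi : F -> algC)
  (HA : 'M[F]_(mA, n)) (HB : 'M[F]_(mB, n)) (d : nat) : Prop :=
  exists a b : 'rV[F]_n, (pauli_weight a b <= d)%N /\ nontrivial_logical chi HA HB a b.

Definition swap_op (F : finFieldType) n (i j : 'I_n) (psi : state F n) : state F n :=
  fun x => psi (\row_k x 0 (tperm i j k)).

Definition logical_identity (F : finFieldType) n mA mB (chi : F -> algC)
  (HA : 'M[F]_(mA, n)) (HB : 'M[F]_(mB, n)) (U : state F n -> state F n) : Prop :=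
  forall psi, in_codespace chi HA HB psi -> U psi = psi.

(** If [psi] is a codeword and [psi x <> 0], the [Z]-stabilizers force [x] into
    the classical code [ker HB] (for a nontrivial character, [chi] is not
    identically [1] on any nonzero line). So either every [x] in [ker HB] has
    [x_i = x_j], and then the swap of qudits [i] and [j] fixes every codeword,
    or some [x0] in [ker HB] has [x0_i <> x0_j]. In the latter case
    [Z^(t (e_i - e_j))] commutes with every [X]-stabilizer because the columns
    [i] and [j] of [HA] agree, and for suitable [t] it takes different
    eigenvalues on the coset states of [0] and of [x0], so it is a nontrivial
    logical operator of weight [2]. *)

From mathcomp Require Import all_boot all_algebra all_fingroup all_field.
From Stdlib Require Import FunctionalExtensionality.
Set Implicit Arguments. Unset Strict Implicit. Unset Printing Implicit Defensive.
Import GRing.Theory.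
Local Open Scope ring_scope.

Section Dotv.

Variables (F : finFieldType) (n : nat).
Implicit Types (w x y : 'rV[F]_n).

Lemma dotv0l x : dotv 0 x = 0.
Proof. by rewrite /dotv mul0mx mxE. Qed.

Lemma dotv0r w : dotv w 0 = 0.
Proof. by rewrite /dotv trmx0 mulmx0 mxE. Qed.

Lemma dotvZl t w x : dotv (t *: w) x = t * dotv w x.
Proof. by rewrite /dotv -scalemxAl mxE. Qed.

Lemma dotvBr w x y : dotv w (x - y) = dotv w x - dotv w y.
Proof. by rewrite /dotv raddfB mulmxBr !mxE. Qed.

Lemma dotv_row m (H : 'M[F]_(m, n)) k x : dotv (row k H) x = (x *m H^T) 0 k.
Proof. by rewrite /dotv -row_mul mxE -[H *m x^T]trmxK trmx_mul trmxK mxE. Qed.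

Lemma dotv_ker m (H : 'M[F]_(m, n)) w x :
  x *m H^T = 0 -> (w <= H)%MS -> dotv w x = 0.
Proof.
move=> xH /submxP[u ->].
by rewrite /dotv -mulmxA -[H *m x^T]trmxK trmx_mul trmxK xH trmx0 mulmx0 mxE.
Qed.

Lemma dotv_delta_pair (i j : 'I_n) x :
  dotv (delta_mx 0 i - delta_mx 0 j) x = x 0 i - x 0 j.
Proof. by rewrite /dotv mulmxBl -!rowE !mxE. Qed.

End Dotv.

Lemma col_eq_sub_entry (F : finFieldType) m n (H : 'M[F]_(m, n)) (i j : 'I_n)
    (v : 'rV[F]_n) :
  col i H = col j H -> (v <= H)%MS -> v 0 i = v 0 j.
Proof.
move=> eq_col /submxP[u ->].
have : col i (u *m H) = col j (u *m H) by rewrite !colE -!mulmxA -!colE eq_col.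
by move/(congr1 (fun c : 'cV[F]_1 => c 0 0)); rewrite !mxE.
Qed.

Lemma nontriv_add_char_line (F : finFieldType) (chi : F -> algC) (s : F) :
  nontriv_add_char chi -> (forall t, chi (t * s) = 1) -> s = 0.
Proof.
move=> [_ [a chi_a]] chi_line; apply/eqP; apply: contraT => s_neq0.
by move: chi_a; rewrite -(divfK s_neq0 a) chi_line eqxx.
Qed.

Section Codespace.

Variables (F : finFieldType) (n mA mB : nat) (chi : F -> algC).
Variables (HA : 'M[F]_(mA, n)) (HB : 'M[F]_(mB, n)).
Implicit Types (psi : state F n) (w x y : 'rV[F]_n).

Local Notation codeword := (in_codespace chi HA HB).

Lemma Xop0 psi : Xop 0 psi = psi.
Proof. by apply: functional_extensionality => x; rewrite /Xop subr0. Qed.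

Lemma Zop_fixed_support w psi x :
  Zop chi w psi = psi -> psi x != 0 -> chi (dotv w x) = 1.
Proof.
move=> /(congr1 (fun phi => phi x)); rewrite /Zop => fix_x psi_x.
apply/eqP; rewrite -subr_eq0 -(mulIr_eq0 _ (mulIf psi_x)).
by rewrite mulrBl fix_x mul1r subrr.
Qed.

Lemma codeword_support psi x :
  nontriv_add_char chi -> codeword psi -> psi x != 0 ->
  chi 0 = 1 /\ x *m HB^T = 0.
Proof.
move=> chi_nt [_ Zfix] psi_x; split.
  by rewrite -(dotv0l x); apply: Zop_fixed_support psi_x; apply/Zfix/sub0mx.
apply/rowP => k; rewrite [RHS]mxE; apply: (nontriv_add_char_line chi_nt) => t.
rewrite -dotv_row -dotvZl; apply: Zop_fixed_support psi_x.
by apply/Zfix/scalemx_sub/row_sub.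
Qed.

Lemma Zop_codeword b psi :
  (forall v, (v <= HA)%MS -> dotv b v = 0) -> codeword psi -> codeword (Zop chi b psi).
Proof.
move=> bA [Xfix Zfix]; split=> [v vA | w wB]; apply: functional_extensionality => x.
  have := congr1 (fun phi => phi x) (Xfix v vA).
  by rewrite /Xop /Zop dotvBr (bA v vA) subr0 => ->.
have := congr1 (fun phi => phi x) (Zfix w wB).
by rewrite /Zop mulrCA => ->.
Qed.

Definition coset_state y : state F n :=
  fun x => if (x - y <= HA)%MS then 1 else 0.

Lemma coset_state_codeword y :
  chi 0 = 1 -> HA *m HB^T = 0 -> y *m HB^T = 0 -> codeword (coset_state y).
Proof.
move=> chi0 AB yB; split=> [v vA | w wB]; apply: functional_extensionality => x.
  rewrite /Xop /coset_state addrAC; congr (if _ then _ else _).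
  apply/idP/idP => [xvy | xy]; last by rewrite addmx_sub // eqmx_opp.
  by rewrite -(subrK v (x - y)) addmx_sub.
rewrite /Zop /coset_state; case: ifP => [/submxP[u xy] | _]; last by rewrite mulr0.
have xyB : (x - y) *m HB^T = 0 by rewrite xy -mulmxA AB mulmx0.
have := dotv_ker xyB wB; rewrite dotvBr (dotv_ker yB wB) subr0 => ->.
by rewrite chi0 mulr1.
Qed.

Lemma Z_nontrivial_logical b x0 :
  chi 0 = 1 -> HA *m HB^T = 0 -> x0 *m HB^T = 0 ->
  (forall v, (v <= HA)%MS -> dotv b v = 0) -> chi (dotv b x0) != 1 ->
  nontrivial_logical chi HA HB 0 b.
Proof.
move=> chi0 AB x0B bA chi_bx0; split=> [psi cw | [c Zc]].
  by rewrite Xop0; apply: Zop_codeword.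
have c_eig y : y *m HB^T = 0 -> c = chi (dotv b y).
  move=> yB; have cw_y := coset_state_codeword chi0 AB yB.
  have := congr1 (fun phi => phi y) (Zc _ cw_y).
  by rewrite Xop0 /Zop /coset_state subrr sub0mx !mulr1 => ->.
by move: chi_bx0; rewrite -c_eig // (c_eig 0) ?mul0mx // dotv0r chi0 eqxx.
Qed.

End Codespace.

Section QuditPair.

Variables (F : finFieldType) (n : nat) (i j : 'I_n).

Lemma swap_op_id (psi : state F n) :
  (forall x, psi x != 0 -> x 0 i = x 0 j) -> swap_op i j psi = psi.
Proof.
move=> supp_ij; apply: functional_extensionality => x; rewrite /swap_op.
have psi0 (y : 'rV[F]_n) : y 0 i != y 0 j -> psi y = 0.
  by move=> ne_y; apply: contraTeq ne_y => psi_y; rewrite supp_ij ?eqxx.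
have [eq_x | ne_x] := eqVneq (x 0 i) (x 0 j).
  by congr psi; apply/rowP => k; rewrite mxE; case: tpermP => [->|->|] //; rewrite eq_x.
by rewrite !psi0 // !mxE tpermL tpermR eq_sym.
Qed.

Lemma pauli_weight_Z_pair (t : F) :
  (pauli_weight 0%R (t *: (delta_mx 0 i - delta_mx 0 j))%R <= 2)%N.
Proof.
apply: (leq_trans (subset_leq_card (B := [set i; j]) _)).
  by apply/subsetP => k; rewrite !inE !mxE eqxx /=;
    case: (k == i); case: (k == j); rewrite ?orbT //= oppr0 addr0 mulr0 eqxx.
by rewrite cards2; case: (i != j).
Qed.

End QuditPair.

Theorem lemma3 (F : finFieldType) (n mA mB : nat)
  (HA : 'M[F]_(mA, n)) (HB : 'M[F]_(mB, n)) (chi : F -> algC) (i j : 'I_n) :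
  nontriv_add_char chi ->
  row_free HA -> row_free HB -> HA *m HB^T = 0 ->
  i != j -> col i HA = col j HA ->
  distance_at_most chi HA HB 2 \/ logical_identity chi HA HB (swap_op i j).
Proof.
move=> chi_nt _ _ AB _ eq_col.
(* [chi = 0] satisfies [nontriv_add_char]; its codespace is then trivial, hence
   the conjunct [chi 0 == 1]. *)
pose separating := [exists x0 : 'rV[F]_n, (x0 *m HB^T == 0) && (x0 0 i != x0 0 j)].
case: (boolP (separating && (chi 0 == 1)))
  => [/andP[/existsP[x0 /andP[/eqP x0B x0ij]] /eqP chi0] | no_x0].
  left; have [_ [a chi_a]] := chi_nt.
  pose b : 'rV[F]_n := (a / (x0 0 i - x0 0 j)) *: (delta_mx 0 i - delta_mx 0 j).
  exists 0, b; split; first exact: pauli_weight_Z_pair.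
  apply: (Z_nontrivial_logical chi0 AB x0B) => [v vA|].
    by rewrite dotvZl dotv_delta_pair (col_eq_sub_entry eq_col vA) subrr mulr0.
  by rewrite dotvZl dotv_delta_pair divfK // subr_eq0.
right=> psi cw; apply: swap_op_id => x psi_x.
have [chi0 xB] := codeword_support chi_nt cw psi_x.
apply/eqP; apply: contraNT no_x0 => x_ij.
by rewrite chi0 eqxx andbT; apply/existsP; exists x; rewrite xB eqxx.
Qed.
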